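(* Let $\theta\in\mathbb{R}\setminus\mathbb{Q}$, $p_1,\ldots,p_k\in\mathbb{Z}\setminus\{0\}$ and $\xi_1,\ldots,\xi_k\in\mathbb{Q}\cap[0,1)$, and consider the system $\hat\theta_j=p_j\theta+\xi_j$, $1\le j\le k$. If there exist $1\le j'<j''\le k$ with $p_{j'}p_{j''}=-1$ and $\{\xi_{j'}+\xi_{j''}\}=0$, then this system is equivalent to the system $\hat\theta_j=p_j\theta+\xi_j$, $j\in\{1,\ldots,k\}\setminus\{j',j''\}$, i.e. the two systems have the same effective difference number.
   Context: For a system $\hat\theta_i=q_i\theta+\zeta_i$, $i\in I$ ($I$ finite), with $\theta$ irrational, $q_i\in\mathbb{Z}\setminus\{0\}$, $\zeta_i\in\mathbb{Q}\cap[0,1)$, and for $\eta\in\mathbb{Q}$, set $\eta(\zeta_i)=\{\zeta_i-q_i\eta\}$ (fractional part), $k_0^+(\eta)=\#\{i:\eta(\zeta_i)=0,q_i>0\}$, $k_0^-(\eta)=\#\{i:\eta(\zeta_i)=0,q_i<0\}$. The effective difference number of the system is $\max\{|k_0^+(\eta)-k_0^-(\eta)|:\eta\in\mathbb{Q}\}$ (with $k_0^\pm(\eta)=0$ for the empty system). Two such systems are called equivalent if their effective difference numbers coincide. *)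

From HB Require Import structures.
From mathcomp Require Import all_boot all_order all_algebra.
From mathcomp Require Import boolp reals.
Set Implicit Arguments. Unset Strict Implicit. Unset Printing Implicit Defensive.
Import Order.TTheory GRing.Theory Num.Theory.
Local Open Scope ring_scope.

(* A system  theta_hat_i = q_i theta + zeta_i  is encoded by the finite list of
   its coefficient pairs (q_i, zeta_i) : int * rat. *)
Definition system := seq (int * rat).

Definition fracpart (x : rat) : rat := x - (Num.floor x)%:~R.

Definition eta_zeta (eta : rat) (c : int * rat) : rat := fracpart (c.2 - c.1%:~R * eta).

Definition k0plus (s : system) (eta : rat) : nat :=
  count (fun c => (eta_zeta eta c == 0) && (0 < c.1)) s.
Definition k0minus (s : system) (eta : rat) : nat :=
  count (fun c => (eta_zeta eta c == 0) && (c.1 < 0)) s.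

Definition kdiff (s : system) (eta : rat) : nat :=
  `|(k0plus s eta)%:Z - (k0minus s eta)%:Z|%N.

(* effective difference number: max over eta in Q of kdiff s eta.
   Since 0 <= kdiff s eta <= size s, this is the max over the (finite) set of
   values attained, computed as a bounded max (empty system gives 0). *)
Definition edn (s : system) : nat :=
  \max_(n < (size s).+1 | `[< exists eta : rat, kdiff s eta = n >]) (n : nat).

Definition sys_of (k : nat) (p : 'I_k -> int) (xi : 'I_k -> rat)
  (J : pred 'I_k) : system :=
  [seq (p j, xi j) | j <- enum 'I_k & J j].

From HB Require Import structures.
From mathcomp Require Import all_boot all_order all_algebra.
From mathcomp Require Import boolp reals zify ring.
Import Order.TTheory GRing.Theory Num.Theory.
Local Open Scope ring_scope.

(* Since p j1 * p j2 = -1, the pair of forms is theta + xi and -theta + xi'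
   (in some order) with xi + xi' an integer.  For every rational eta, xi - eta
   is an integer iff xi' + eta is, so the two forms vanish together and then
   contribute one unit to each of k0^+ and k0^-.  Removing them leaves every
   |k0^+ - k0^-|, hence the effective difference number, unchanged. *)

Lemma mulz_eqN1 (a b : int) :
  a * b = -1 -> (a = 1 /\ b = -1) \/ (a = -1 /\ b = 1).
Proof.
move=> ab.
have /andP [/eqP a1 /eqP b1] : (`|a| == 1)%N && (`|b| == 1)%N.
  by rewrite -muln_eq1 -abszM ab.
have [a_eq | a_eq] : a = 1 \/ a = -1 by lia.
  by left; rewrite -ab a_eq mul1r.
by right; split=> //; apply: oppr_inj; rewrite -ab a_eq mulN1r.
Qed.

Lemma fracpart_eq0 (x : rat) : (fracpart x == 0) = (x \is a Num.int).
Proof. by rewrite /fracpart subr_eq0 intrEfloor eq_sym. Qed.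

Lemma int_subr_addr (x y e : rat) : x + y \is a Num.int ->
  (x - e \is a Num.int) = (y + e \is a Num.int).
Proof.
move=> xy_int; apply/idP/idP => int_e.
  have -> : y + e = (x + y) - (x - e) by ring.
  by rewrite rpredB.
have -> : x - e = (x + y) - (y + e) by ring.
by rewrite rpredB.
Qed.

Lemma k0plus_cancel_pair (q1 q2 : int) (x1 x2 eta : rat) :
  q1 * q2 = -1 -> x1 + x2 \is a Num.int ->
  k0plus [:: (q1, x1); (q2, x2)] eta = k0minus [:: (q1, x1); (q2, x2)] eta.
Proof.
move=> /mulz_eqN1 [[-> ->] | [-> ->]] x12_int;
  rewrite /k0plus /k0minus /eta_zeta /= !fracpart_eq0 ?mulr1z ?mulrN1z
    ?mul1r ?mulN1r ?opprK /= ?andbT ?andbF ?addn0.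
- by rewrite (int_subr_addr _ _ eta x12_int).
- by rewrite addrC in x12_int; rewrite (int_subr_addr _ _ eta x12_int).
Qed.

Lemma kdiff_cat_balanced (t s : system) (eta : rat) :
  k0plus t eta = k0minus t eta -> kdiff (t ++ s) eta = kdiff s eta.
Proof.
rewrite /kdiff /k0plus /k0minus !count_cat => balanced.
by rewrite balanced !PoszD; congr absz; ring.
Qed.

Lemma kdiff_perm {s t : system} : perm_eq s t -> kdiff s =1 kdiff t.
Proof. by move=> /permP st eta; rewrite /kdiff /k0plus /k0minus !st. Qed.

Lemma kdiff_le_size (s : system) (eta : rat) : (kdiff s eta <= size s)%N.
Proof.
rewrite /kdiff /k0plus /k0minus.
have := count_size (fun c => (eta_zeta eta c == 0) && (0 < c.1)) s.
have := count_size (fun c => (eta_zeta eta c == 0) && (c.1 < 0)) s.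
lia.
Qed.

(* [edn] is a maximum over an index range depending on [size s]; the size
   hypothesis lets the range of [t] be widened to that of [s]. *)
Lemma edn_eq (s t : system) :
  kdiff s =1 kdiff t -> (size t <= size s)%N -> edn s = edn t.
Proof.
move=> st le_ts; rewrite /edn [RHS](big_ord_widen_cond (size s).+1
  (fun n => `[< exists eta : rat, kdiff t eta = n >]) id) //.
apply: eq_bigl => n; apply/asboolP/andP => [[eta <-] | [/asboolP [eta <-] _]].
  split; first by apply/asboolP; exists eta; rewrite st.
  by rewrite st ltnS kdiff_le_size.
by exists eta; rewrite st.
Qed.

Lemma perm_sys_of_pair {k : nat} (p : 'I_k -> int) (xi : 'I_k -> rat)
    {j1 j2 : 'I_k} : j1 != j2 ->
  perm_eq (sys_of p xi predT)
    ([:: (p j1, xi j1); (p j2, xi j2)]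
       ++ sys_of p xi (fun j => (j != j1) && (j != j2))).
Proof.
move=> j12; rewrite /sys_of filter_predT !cat_cons cat0s -!map_cons.
apply: perm_map.
have uniq_rem1 : uniq (rem j1 (enum 'I_k)) by rewrite rem_uniq ?enum_uniq.
apply: perm_trans (perm_to_rem (mem_enum _ j1)) _; rewrite perm_cons.
have j2_rem1 : j2 \in rem j1 (enum 'I_k).
  by rewrite rem_filter ?enum_uniq // mem_filter /= eq_sym j12 mem_enum.
apply: perm_trans (perm_to_rem j2_rem1) _; rewrite perm_cons.
rewrite rem_filter // rem_filter ?enum_uniq // -filter_predI.
by rewrite (@eq_filter _ _ (fun j => (j != j1) && (j != j2))) // => j /=;
  rewrite andbC.
Qed.

Theorem lemma4p3 (R : realType) (theta : R) (k : nat)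
  (p : 'I_k -> int) (xi : 'I_k -> rat) (j1 j2 : 'I_k) :
  (forall q : rat, theta != ratr q) ->
  (forall j, p j != 0) ->
  (forall j, 0 <= xi j < 1) ->
  (j1 < j2)%N ->
  p j1 * p j2 = -1 ->
  fracpart (xi j1 + xi j2) = 0 ->
  edn (sys_of p xi predT) =
  edn (sys_of p xi (fun j => (j != j1) && (j != j2))).
Proof.
move=> _ _ _ lt_j12 p12 frac12.
have j12 : j1 != j2 by rewrite neq_ltn lt_j12.
have xi12_int : xi j1 + xi j2 \is a Num.int by rewrite -fracpart_eq0 frac12.
have perm12 := perm_sys_of_pair p xi j12.
apply: edn_eq; last by rewrite (perm_size perm12) size_cat leq_addl.
move=> eta; rewrite (kdiff_perm perm12) kdiff_cat_balanced //.
exact: k0plus_cancel_pair.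
Qed.
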